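(* Let $N_p\ge1$ be an integer and $F,G\in\mathbb{C}$ with $|G|<1$ and $|G-F|<1/N_p$. Define the $(N_p+1)\times(N_p+1)$ lower bidiagonal matrices $\mathbf{M}_F$, $\mathbf{M}_G$ with all diagonal entries $1$, subdiagonal entries $-F$ (respectively $-G$), and all other entries zero, and let $\mathbf{E}=\mathbf{I}-\mathbf{M}_G^{-1}\mathbf{M}_F$. Then $\|\mathbf{E}\|_\infty<1$; consequently the Parareal error iteration $\mathbf{e}^{k}=\mathbf{E}\mathbf{e}^{k-1}$ satisfies $\|\mathbf{e}^{k}\|_\infty<\|\mathbf{e}^{k-1}\|_\infty$ whenever $\mathbf{e}^{k-1}\neq 0$.
   Context: $\mathbf{E}$ is the error-propagation matrix of the Parareal iteration applied to a scalar linear ODE, where $F$ and $G$ are the complex amplification factors of the fine and coarse propagators over one processor interval and $N_p$ is the number of processors. $\|\cdot\|_\infty$ denotes the vector $\infty$-norm and its induced matrix norm. *)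

From HB Require Import structures.
From mathcomp Require Import all_boot all_order all_algebra.
Set Implicit Arguments. Unset Strict Implicit. Unset Printing Implicit Defensive.
Import Order.TTheory GRing.Theory Num.Theory.
Local Open Scope ring_scope.

Definition vnorm_inf (C : numClosedFieldType) (n : nat) (v : 'cV[C]_n) : C :=
  \big[Num.max/0]_(i < n) `|v i 0|.

Definition mxnorm_inf (C : numClosedFieldType) (m n : nat) (A : 'M[C]_(m, n)) : C :=
  \big[Num.max/0]_(i < m) \sum_(j < n) `|A i j|.

Definition bidiag (C : numClosedFieldType) (n : nat) (a : C) : 'M[C]_n :=
  \matrix_(i < n, j < n)
    (if i == j then 1 else if (j.+1 == i)%N then - a else 0).

Definition parareal_E (C : numClosedFieldType) (n : nat) (F G : C) : 'M[C]_n :=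
  1%:M - invmx (bidiag n G) *m bidiag n F.

From HB Require Import structures.
From mathcomp Require Import all_boot all_order all_algebra.
Set Implicit Arguments. Unset Strict Implicit. Unset Printing Implicit Defensive.
Import Order.TTheory GRing.Theory Num.Theory.
Local Open Scope ring_scope.

(* Multiplying E = I - M_G^-1 M_F by M_G gives M_G E = M_G - M_F, so row k+1 of E
   is (F - G) times the k-th unit row plus G times row k, and row 0 vanishes.
   Hence when |G| <= 1 the k-th absolute row sum is at most k |G - F| <= Np |G - F| < 1,
   i.e. ||E||_oo < 1, and ||E e||_oo <= ||E||_oo ||e||_oo < ||e||_oo for e <> 0. *)

(* The library's [le_bigmax] needs a total order; nonnegative elements of a
   numDomainType are real, hence pairwise comparable, which suffices here. *)
Section BigmaxNonneg.
Variables (R : numDomainType) (I : finType) (f : I -> R).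
Hypothesis f_ge0 : forall i, 0 <= f i.

Lemma bigmax_nonneg_ge0 (r : seq I) (P : pred I) :
  0 <= \big[Num.max/0]_(i <- r | P i) f i.
Proof.
apply: (big_ind (fun x => 0 <= x)) => // x y x0 y0.
by rewrite comparable_le_max ?x0 // real_comparable ?ger0_real.
Qed.

Lemma le_bigmax_nonneg j : f j <= \big[Num.max/0]_i f i.
Proof.
move: (mem_index_enum j); elim: (index_enum I) => // i r IH.
have cmp : f i >=< \big[Num.max/0]_(k <- r) f k.
  by rewrite real_comparable ?ger0_real ?bigmax_nonneg_ge0.
rewrite inE big_cons comparable_le_max // => /predU1P [-> | /IH ->].
  by rewrite lexx.
by rewrite orbT.
Qed.

End BigmaxNonneg.

Section InfinityNorm.
Variable C : numClosedFieldType.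

Lemma vnorm_inf_ge0 n (v : 'cV[C]_n) : 0 <= vnorm_inf v.
Proof. exact: bigmax_nonneg_ge0. Qed.

Lemma le_vnorm_inf n (v : 'cV[C]_n) i : `|v i 0| <= vnorm_inf v.
Proof. by apply: (@le_bigmax_nonneg _ _ (fun k => `|v k 0|)). Qed.

Lemma vnorm_inf_gt0 n (v : 'cV[C]_n) : v != 0 -> 0 < vnorm_inf v.
Proof.
move=> v_neq0; have [i vi_neq0] : exists i, v i 0 != 0.
  apply/existsP; apply: contraR v_neq0 => /existsPn v0.
  by apply/eqP/matrixP => i j; rewrite ord1 mxE; apply/eqP/negPn.
by apply: (lt_le_trans _ (le_vnorm_inf v i)); rewrite normr_gt0.
Qed.

Lemma mxnorm_inf_ge0 m n (A : 'M[C]_(m, n)) : 0 <= mxnorm_inf A.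
Proof. by apply: bigmax_nonneg_ge0 => i; apply: sumr_ge0. Qed.

Lemma le_row_mxnorm_inf m n (A : 'M[C]_(m, n)) i :
  \sum_j `|A i j| <= mxnorm_inf A.
Proof.
by apply: (@le_bigmax_nonneg _ _ (fun k => \sum_j `|A k j|)) => k; apply: sumr_ge0.
Qed.

Lemma mxnorm_inf_lt m n (A : 'M[C]_(m, n)) z : 0 < z ->
  (forall i, \sum_j `|A i j| < z) -> mxnorm_inf A < z.
Proof. by move=> z_gt0 row_lt; apply: bigmax_lt => // i _; apply: row_lt. Qed.

Lemma vnorm_inf_mulmx m n (A : 'M[C]_(m, n)) (v : 'cV[C]_n) :
  vnorm_inf (A *m v) <= mxnorm_inf A * vnorm_inf v.
Proof.
apply: bigmax_le => [|i _]; first by rewrite mulr_ge0 ?mxnorm_inf_ge0 ?vnorm_inf_ge0.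
rewrite mxE; apply: le_trans (ler_norm_sum _ _ _) _.
apply: le_trans (ler_wpM2r (vnorm_inf_ge0 v) (le_row_mxnorm_inf A i)).
rewrite mulr_suml; apply: ler_sum => j _.
by rewrite normrM ler_wpM2l ?le_vnorm_inf.
Qed.

Lemma vnorm_inf_mulmx_lt n (A : 'M[C]_n) (v : 'cV[C]_n) :
  mxnorm_inf A < 1 -> v != 0 -> vnorm_inf (A *m v) < vnorm_inf v.
Proof.
move=> A_lt1 /vnorm_inf_gt0 v_gt0; apply: le_lt_trans (vnorm_inf_mulmx A v) _.
by rewrite gtr_pMl.
Qed.

End InfinityNorm.

Section Bidiagonal.
Variable C : numClosedFieldType.
Implicit Types (a F G : C) (n p : nat).

Lemma bidiagE n a (i j : 'I_n) : bidiag n a i j = (i == j)%:R - a *+ (j.+1 == i)%N.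
Proof.
rewrite mxE; have [->|_] := eqVneq i j; first by rewrite gtn_eqF ?subr0.
by case: eqP; rewrite sub0r ?mulr1n ?mulr0n ?oppr0.
Qed.

Lemma bidiag_unitmx n a : bidiag n a \in unitmx.
Proof.
rewrite unitmxE det_trig; first by rewrite big1 ?unitr1 // => i _; rewrite mxE eqxx.
apply/is_trig_mxP => i j lt_ij.
by rewrite bidiagE -val_eqE /= (ltn_eqF lt_ij) gtn_eqF ?subrr // ltnW.
Qed.

Lemma mulmx_bidiag n p a (A : 'M[C]_(n, p)) i j :
  (bidiag n a *m A) i j = A i j - a * \sum_(l < n | (l.+1 == i)%N) A l j.
Proof.
rewrite mxE; under eq_bigr do rewrite bidiagE mulrBl mulr_natl mulrnAl -mulrnAr.
rewrite sumrB -mulr_sumr; under [X in X - _]eq_bigr do rewrite mulrb.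
under [X in _ - a * X]eq_bigr do rewrite mulrb.
by rewrite -!big_mkcond (big_pred1 i) // => l; rewrite eq_sym.
Qed.

Lemma mulmx_bidiag_row0 n p a (A : 'M[C]_(n.+1, p)) j :
  (bidiag n.+1 a *m A) 0 j = A 0 j.
Proof. by rewrite mulmx_bidiag big_pred0 ?mulr0 ?subr0. Qed.

Lemma mulmx_bidiag_rowS n p a (A : 'M[C]_(n.+1, p)) k j : (k < n)%N ->
  (bidiag n.+1 a *m A) (inord k.+1) j = A (inord k.+1) j - a * A (inord k) j.
Proof.
move=> lt_kn; rewrite mulmx_bidiag (big_pred1 (inord k)) // => l /=.
by rewrite -val_eqE /= !inordK ?eqSS // ltnW.
Qed.

Lemma bidiagB n a b (i j : 'I_n) :
  (bidiag n a - bidiag n b) i j = (b - a) *+ (j.+1 == i)%N.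
Proof. by rewrite mxE [X in _ + X]mxE !bidiagE opprB addrC addrA subrK mulrnBl. Qed.

Lemma bidiag_mulmx_parareal_E n F G :
  bidiag n G *m parareal_E n F G = bidiag n G - bidiag n F.
Proof.
by rewrite /parareal_E mulmxBr mulmx1 mulmxA mulmxV ?mul1mx ?bidiag_unitmx.
Qed.

Lemma parareal_E_row0 n F G j : parareal_E n.+1 F G 0 j = 0.
Proof.
have := bidiag_mulmx_parareal_E n.+1 F G.
move/(congr1 (fun M : 'M[C]_n.+1 => M 0 j)).
by rewrite /= mulmx_bidiag_row0 bidiagB => ->.
Qed.

Lemma parareal_E_rowS n F G k j : (k < n)%N ->
  parareal_E n.+1 F G (inord k.+1) j =
  (F - G) *+ (j == k :> nat) + G * parareal_E n.+1 F G (inord k) j.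
Proof.
move=> lt_kn; have := bidiag_mulmx_parareal_E n.+1 F G.
move/(congr1 (fun M : 'M[C]_n.+1 => M (inord k.+1) j)).
by rewrite /= mulmx_bidiag_rowS // bidiagB inordK ?eqSS // => <-; rewrite subrK.
Qed.

Lemma parareal_E_row_sum n F G k : `|G| <= 1 -> (k <= n)%N ->
  \sum_j `|parareal_E n.+1 F G (inord k) j| <= k%:R * `|G - F|.
Proof.
move=> G_le1; elim: k => [_ | k IH lt_kn].
  have -> : inord 0 = 0 :> 'I_n.+1 by apply: val_inj; rewrite /= inordK.
  by rewrite mul0r big1 // => j _; rewrite parareal_E_row0 normr0.
have row_le j : `|parareal_E n.+1 F G (inord k.+1) j| <=
    `|G - F| *+ (j == k :> nat) + `|G| * `|parareal_E n.+1 F G (inord k) j|.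
  by rewrite parareal_E_rowS // (distrC G) -normrMn -normrM ler_normD.
apply: le_trans (ler_sum _ (fun j _ => row_le j)) _.
rewrite big_split /= -mulr_sumr -natr1 mulrDl mul1r addrC; apply: lerD.
  apply: le_trans (ler_wpM2r (sumr_ge0 _ (fun j _ => normr_ge0 _)) G_le1) _.
  by rewrite mul1r IH // ltnW.
under eq_bigr do rewrite mulrb.
rewrite -big_mkcond (big_pred1 (inord k)) // => j /=.
by rewrite -val_eqE /= inordK // ltnW.
Qed.

Lemma mxnorm_parareal_E_lt1 n F G : `|G| <= 1 -> n%:R * `|G - F| < 1 ->
  mxnorm_inf (parareal_E n.+1 F G) < 1.
Proof.
move=> G_le1 nGF_lt1; apply: mxnorm_inf_lt => // i; rewrite -(inord_val i).
apply: le_lt_trans (parareal_E_row_sum F G_le1 _) _; first by rewrite -ltnS.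
by apply: le_lt_trans nGF_lt1; rewrite ler_wpM2r // ler_nat -ltnS.
Qed.

End Bidiagonal.

Theorem mainTheorem5 (C : numClosedFieldType) (Np : nat) (F G : C) :
  (1 <= Np)%N ->
  `|G| < 1 ->
  `|G - F| < 1 / Np%:R ->
  mxnorm_inf (parareal_E Np.+1 F G) < 1 /\
  (forall e : nat -> 'cV[C]_(Np.+1),
     (forall k, e k.+1 = parareal_E Np.+1 F G *m e k) ->
     forall k, e k != 0 -> vnorm_inf (e k.+1) < vnorm_inf (e k)).
Proof.
move=> Np_gt0 G_lt1 GF_lt.
have NpGF_lt1 : Np%:R * `|G - F| < 1 by rewrite mulrC -ltr_pdivlMr ?ltr0n.
have E_lt1 := mxnorm_parareal_E_lt1 (ltW G_lt1) NpGF_lt1.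
split=> // e e_rec k ek_neq0.
by rewrite e_rec vnorm_inf_mulmx_lt.
Qed.
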